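(* Let $k\ge1$ and $n\ge0$. The map $\psi$ from $\mathcal{A}^k_n$ to the set $\overline{\mathcal{Q}}^k_n$ of $k$-quasi-Stirling permutations of size $n$, defined recursively by letting $\psi$ of a tree consisting of a single leaf be the empty sequence, and, for a tree whose root is an internal vertex with label $b$ and whose root subtrees from left to right are $S_1,\dots,S_k$, $$\psi(T)=\psi(S_1)\,b\,\psi(S_2)\,b\cdots\psi(S_k)\,b$$ (i.e. a left-to-right depth-first walk recording the label of a vertex each time the walk returns to it from a child), is well defined (its values lie in $\overline{\mathcal{Q}}^k_n$) and is a bijection $\mathcal{A}^k_n\to\overline{\mathcal{Q}}^k_n$.
   Context: A $k$-ary tree is a plane (ordered) rooted tree in which every vertex has either $0$ or $k$ children; vertices with $k$ children are internal. $\mathcal{A}^k_n$ is the set of $k$-ary trees with $n$ internal vertices whose internal vertices are labeled bijectively by $\{1,\dots,n\}$ (leaves are unlabeled). A $k$-quasi-Stirling permutation of size $n$ is a permutation $\pi$ of the multiset $\{1^k,2^k,\dots,n^k\}$ (each of $1,\dots,n$ appearing $k$ times) that avoids $1212$ and $2121$, i.e. there are no indices $i<j<k'<\ell$ with $\pi_i=\pi_{k'}\neq\pi_j=\pi_\ell$. *)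

From mathcomp Require Import all_boot.
Set Implicit Arguments. Unset Strict Implicit. Unset Printing Implicit Defensive.

Inductive ktree : Type :=
| Leaf : ktree
| Node : nat -> seq ktree -> ktree.

Fixpoint is_kary (k : nat) (t : ktree) : bool :=
  match t with
  | Leaf => true
  | Node _ ts => (size ts == k) && all (is_kary k) ts
  end.

Fixpoint labels (t : ktree) : seq nat :=
  match t with
  | Leaf => [::]
  | Node b ts => b :: flatten (map labels ts)
  end.

Definition in_A (k n : nat) (t : ktree) : Prop :=
  is_kary k t /\ perm_eq (labels t) (iota 1 n).

Fixpoint psi (t : ktree) : seq nat :=
  match t with
  | Leaf => [::]
  | Node b ts => flatten (map (fun s => rcons (psi s) b) ts)
  end.

Definition avoids_1212_2121 (s : seq nat) : Prop :=
  forall i j k' l, i < j -> j < k' -> k' < l -> l < size s ->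
    ~ (nth 0 s i = nth 0 s k' /\ nth 0 s j = nth 0 s l /\
       nth 0 s i <> nth 0 s j).

Definition quasi_stirling (k n : nat) (s : seq nat) : Prop :=
  perm_eq s (flatten [seq nseq k i | i <- iota 1 n]) /\ avoids_1212_2121 s.

From HB Require Import structures.
From mathcomp Require Import all_boot.
Set Implicit Arguments. Unset Strict Implicit. Unset Printing Implicit Defensive.

(* A word avoids 1212 and 2121 iff it has no subsequence x y x y with x <> y.
   If w_1, ..., w_k use pairwise disjoint letters, none of them the letter b,
   then w_1 b w_2 b ... w_k b has no such subsequence as soon as the w_i have
   none: an occurrence would have to use letters of two different blocks, and
   the only letter shared across blocks is b, which never reappears inside a
   block.  This makes psi land in the quasi-Stirling words.  Conversely a
   quasi-Stirling word ends with some letter b; cutting it after each of the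
   k occurrences of b gives k blocks, and a letter c in two blocks would give
   the forbidden c b c b, so the blocks use disjoint letters, are themselves
   quasi-Stirling, and recursion rebuilds the unique tree mapped to the word. *)

Section Words.
Variable T : eqType.
Implicit Types (s u v w p : seq T) (ws : seq (seq T)).

Lemma subseq_cons_dropP x0 x p s m :
  subseq (x :: p) (drop m s) <->
  exists i, [/\ m <= i < size s, nth x0 s i = x & subseq p (drop i.+1 s)].
Proof.
split.
  elim: s m => [|y s IHs] [|m] //=.
  - case: eqVneq => [-> sub_p | _]; first by exists 0; rewrite drop0.
    rewrite -{1}[s]drop0 => /IHs [i [/andP [_ lt_i] <- sub_p]].
    by exists i.+1.
  - by move=> /IHs [i [/andP [le_mi lt_i] <- sub_p]]; exists i.+1; rewrite ltnS le_mi.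
case=> i [/andP [le_mi lt_i] <- sub_p].
apply: subseq_trans (drop_subseq (drop m s) (i - m)).
by rewrite drop_drop subnK // (drop_nth x0 lt_i) /= eqxx.
Qed.

Lemma subseq_catP p s1 s2 :
  subseq p (s1 ++ s2) -> exists i, subseq (take i p) s1 /\ subseq (drop i p) s2.
Proof.
elim: s1 p => [|y s1 IHs] p; first by move=> sub_p; exists 0; rewrite take0 drop0.
case: p => [_|x p] /=; first by exists 0; rewrite !sub0seq.
case: eqVneq => [-> /IHs [i [sub1 sub2]] | _ /IHs [i [sub1 sub2]]].
  by exists i.+1; rewrite /= eqxx.
by exists i; split=> //; exact: subseq_trans sub1 (subseq_cons s1 y).
Qed.

Definition crossing_free s := forall x y, x != y -> ~~ subseq [:: x; y; x; y] s.

Lemma crossing_free_subseq s1 s2 : subseq s1 s2 -> crossing_free s2 -> crossing_free s1.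
Proof.
move=> sub12 cf2 x y xy; apply: contra (cf2 x y xy) => sub1.
exact: subseq_trans sub1 sub12.
Qed.

Lemma crossing_free_cat b u v :
  crossing_free u -> crossing_free v -> (forall x, x \in u -> x \in v -> x = b) ->
  (forall x, x != b -> ~~ subseq [:: x; b; x] u) ->
  (forall x, x != b -> ~~ subseq [:: x; b; x] v) ->
  crossing_free (u ++ v).
Proof.
move=> cf_u cf_v shared no_u no_v x y xy; apply/negP.
have shared_in z p q : subseq p u -> subseq q v -> z \in p -> z \in q -> z = b.
  by move=> /mem_subseq pu /mem_subseq qv /pu zu /qv; exact: shared.
case/subseq_catP=> -[|[|[|[|i]]]] /= [sub_u sub_v].
- by move: (cf_v x y xy); rewrite sub_v.
- have xb : x = b by apply: (shared_in x _ _ sub_u sub_v); rewrite !inE eqxx ?orbT.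
  by rewrite xb eq_sym in xy; move: (no_v y xy); rewrite -xb sub_v.
- have xb : x = b by apply: (shared_in x _ _ sub_u sub_v); rewrite !inE eqxx ?orbT.
  have yb : y = b by apply: (shared_in y _ _ sub_u sub_v); rewrite !inE eqxx ?orbT.
  by rewrite xb yb eqxx in xy.
- have yb : y = b by apply: (shared_in y _ _ sub_u sub_v); rewrite !inE eqxx ?orbT.
  by rewrite yb in xy; move: (no_u x xy); rewrite -yb sub_u.
- by move: (cf_u x y xy); rewrite sub_u.
Qed.

Lemma subseq_rcons_neq x b p w :
  x != b -> subseq (rcons p x) (rcons w b) -> subseq (rcons p x) w.
Proof.
by move=> xb; rewrite -subseq_rev !rev_rcons /= (negbTE xb) -rev_rcons subseq_rev.
Qed.

Lemma rcons_no_xbx x b w : b \notin w -> x != b -> ~~ subseq [:: x; b; x] (rcons w b).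
Proof.
move=> bw xb; apply: contra bw => /(subseq_rcons_neq (p := [:: x; b]) xb) /mem_subseq.
by apply; rewrite !inE eqxx orbT.
Qed.

Lemma crossing_free_rcons b w : b \notin w -> crossing_free w -> crossing_free (rcons w b).
Proof.
move=> bw cf_w x y; have [-> | yb] := eqVneq y b => xy.
  apply: contra (rcons_no_xbx bw xy); apply: subseq_trans.
  exact: (prefix_subseq [:: x; b; x] [:: b]).
by apply: contra (cf_w x y xy); exact: (subseq_rcons_neq (p := [:: x; y; x]) yb).
Qed.

Lemma subseq_mem_rcons x b w : x \in w -> subseq [:: x; b] (rcons w b).
Proof. by move=> xw; rewrite -cats1; apply: (@cat_subseq _ [:: x]); rewrite sub1seq ?mem_head. Qed.

Definition disjoint_seq u v := ~~ has [in u] v.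

Lemma disjoint_seq_flatten u ws : disjoint_seq u (flatten ws) = all (disjoint_seq u) ws.
Proof. by elim: ws => //= v ws <-; rewrite /disjoint_seq has_cat negb_or. Qed.

Lemma uniq_flatten ws : uniq (flatten ws) = all uniq ws && pairwise disjoint_seq ws.
Proof.
elim: ws => //= w ws IH.
rewrite cat_uniq -[~~ has _ _]/(disjoint_seq w _) disjoint_seq_flatten IH.
by rewrite -!andbA; congr (_ && _); exact: andbCA.
Qed.

Lemma count_flatten_disjoint x w ws :
  pairwise disjoint_seq ws -> w \in ws -> x \in w -> count_mem x (flatten ws) = count_mem x w.
Proof.
elim: ws => //= w' ws IH /andP [dis pw]; rewrite inE count_cat => /predU1P [-> | wws] xw.
  rewrite -disjoint_seq_flatten in dis.
  by rewrite (count_memPn (contraL (hasPn dis x) xw)) addn0.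
by rewrite (count_memPn (hasPn (allP dis w wws) x xw)) IH.
Qed.

Definition flatten_rcons b ws := flatten [seq rcons w b | w <- ws].

Lemma flatten_rcons_cons b w ws :
  flatten_rcons b (w :: ws) = rcons w b ++ flatten_rcons b ws.
Proof. by []. Qed.

Lemma perm_flatten_rcons b ws :
  perm_eq (flatten_rcons b ws) (flatten ws ++ nseq (size ws) b).
Proof.
elim: ws => //= w ws IH; rewrite flatten_rcons_cons -cats1 -!catA perm_cat2l /=.
by rewrite perm_sym -cat1s perm_catCA perm_cons perm_sym.
Qed.

Lemma count_flatten_rcons x b ws :
  count_mem x (flatten_rcons b ws) = count_mem x (flatten ws) + (b == x) * size ws.
Proof. by rewrite (permP (perm_flatten_rcons b ws)) count_cat count_nseq. Qed.

Lemma rcons_subseq_flatten_rcons b w ws : w \in ws -> subseq (rcons w b) (flatten_rcons b ws).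
Proof.
elim: ws => //= w' ws IH; rewrite inE flatten_rcons_cons => /predU1P [-> | /IH sub].
  exact: prefix_subseq.
exact: subseq_trans sub (suffix_subseq _ _).
Qed.

Lemma last_flatten_rcons x b ws : ws != [::] -> last x (flatten_rcons b ws) = b.
Proof.
elim: ws x => // w [|w' ws] IH x _; first by rewrite /flatten_rcons /= cats0 last_rcons.
by rewrite flatten_rcons_cons last_cat IH.
Qed.

Lemma flatten_rcons_inj b ws1 ws2 : b \notin flatten ws1 -> b \notin flatten ws2 ->
  flatten_rcons b ws1 = flatten_rcons b ws2 -> ws1 = ws2.
Proof.
elim: ws1 ws2 => [|w1 ws1 IH] [|w2 ws2] //=; rewrite ?flatten_rcons_cons ?cat_rcons.
- by case: w2.
- by case: w1.
rewrite !mem_cat !negb_or => /andP [bw1 bws1] /andP [bw2 bws2] E.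
have index_b w s : b \notin w -> index b (w ++ b :: s) = size w.
  by move=> bw; rewrite index_cat (negbTE bw) /= eqxx addn0.
have size12 : size w1 = size w2.
  by rewrite -(index_b w1 (flatten_rcons b ws1) bw1) E index_b.
by move/eqP: E; rewrite eqseq_cat // eqseq_cons eqxx => /andP [/eqP -> /eqP /IH ->].
Qed.

Lemma rcons_flatten_rcons s b :
  exists2 ws, rcons s b = flatten_rcons b ws & b \notin flatten ws.
Proof.
elim: s => [|x s [ws Es bws]] /=; first by exists [:: [::]].
have [-> | xb] := eqVneq x b; first by exists ([::] :: ws); rewrite ?Es.
case: ws Es bws => [|w ws]; first by case: s.
rewrite flatten_rcons_cons /= mem_cat negb_or => Es /andP [bw bws].
by exists ((x :: w) :: ws); rewrite ?Es //= inE negb_or eq_sym xb mem_cat negb_or bw.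
Qed.

Lemma mem_rcons_flatten_rcons x b w ws : all (disjoint_seq w) ws ->
  x \in rcons w b -> x \in flatten_rcons b ws -> x = b.
Proof.
rewrite -disjoint_seq_flatten => dis.
rewrite mem_rcons inE (perm_mem (perm_flatten_rcons b ws)) mem_cat mem_nseq.
case/predU1P=> [// | xw] /orP [xws | /andP [_ /eqP //]].
by move: (hasPn dis x xws); rewrite xw.
Qed.

Lemma flatten_rcons_no_xbx x b ws : b \notin flatten ws -> pairwise disjoint_seq ws ->
  x != b -> ~~ subseq [:: x; b; x] (flatten_rcons b ws).
Proof.
move=> + + xb; elim: ws => //= w ws IH; rewrite mem_cat negb_or flatten_rcons_cons.
move=> /andP [bw bws] /andP [dis pw]; apply/negP.
have shared p q : subseq p (rcons w b) -> subseq q (flatten_rcons b ws) ->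
    x \in p -> x \in q -> False.
  move=> /mem_subseq sub_p /mem_subseq sub_q /sub_p xp /sub_q xq.
  by rewrite (mem_rcons_flatten_rcons dis xp xq) eqxx in xb.
case/subseq_catP=> -[|[|[|i]]] /= [sub1 sub2].
- by move: (IH bws pw); rewrite sub2.
- by apply: (shared _ _ sub1 sub2); rewrite !inE eqxx ?orbT.
- by apply: (shared _ _ sub1 sub2); rewrite !inE eqxx ?orbT.
- by move: (rcons_no_xbx bw xb); rewrite sub1.
Qed.

Lemma crossing_free_flatten_rcons b ws : b \notin flatten ws -> pairwise disjoint_seq ws ->
  {in ws, forall w, crossing_free w} -> crossing_free (flatten_rcons b ws).
Proof.
elim: ws => [_ _ _ x y _ | w ws IH] //=; rewrite mem_cat negb_or flatten_rcons_cons.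
move=> /andP [bw bws] /andP [dis pw] cf_ws.
apply: (@crossing_free_cat b).
- by apply: crossing_free_rcons bw _; apply: cf_ws; exact: mem_head.
- by apply: IH => // w' w'ws; apply: cf_ws; rewrite inE w'ws orbT.
- by move=> x; exact: mem_rcons_flatten_rcons.
- by move=> x; exact: rcons_no_xbx.
- by move=> x; exact: flatten_rcons_no_xbx.
Qed.

Lemma flatten_rcons_pairwise_disjoint b ws : b \notin flatten ws ->
  crossing_free (flatten_rcons b ws) -> pairwise disjoint_seq ws.
Proof.
elim: ws => //= w ws IH; rewrite mem_cat negb_or flatten_rcons_cons.
move=> /andP [bw bws] cf; rewrite IH //; last exact: crossing_free_subseq (suffix_subseq _ _) cf.
rewrite andbT; apply/allP => w' w'ws; apply/hasPn => x xw'; apply/negP => xw.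
have xb : x != b by apply: contraNneq bw => <-.
apply: (negP (cf x b xb)); rewrite -[[:: x; b; x; b]]/([:: x; b] ++ [:: x; b]).
apply: cat_subseq; first exact: subseq_mem_rcons.
exact: subseq_trans (subseq_mem_rcons b xw') (rcons_subseq_flatten_rcons b w'ws).
Qed.
End Words.

Arguments disjoint_seq {T} u v.

Lemma avoids_1212_2121P s : avoids_1212_2121 s <-> crossing_free s.
Proof.
split=> [avoid x y xy | cf i j k l ij jk kl l_s [eq_ik [eq_jl neq_ij]]].
  apply/negP; rewrite -[s]drop0.
  case/(subseq_cons_dropP 0) => i [/andP [_ i_s] s_i].
  case/(subseq_cons_dropP 0) => j [/andP [ij j_s] s_j].
  case/(subseq_cons_dropP 0) => k [/andP [jk k_s] s_k].
  case/(subseq_cons_dropP 0) => l [/andP [kl l_s] s_l _].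
  apply: (avoid i j k l ij jk kl l_s).
  by rewrite s_i s_j s_k s_l; split=> //; split=> //; apply/eqP.
have k_s := ltn_trans kl l_s; have j_s := ltn_trans jk k_s; have i_s := ltn_trans ij j_s.
move/negP: (cf _ _ (introN eqP neq_ij)); apply; rewrite -[X in subseq _ X]drop0.
apply/(subseq_cons_dropP 0); exists i; split; rewrite ?i_s //.
apply/(subseq_cons_dropP 0); exists j; split; rewrite ?ij ?j_s //.
apply/(subseq_cons_dropP 0); exists k; split; rewrite ?jk ?k_s //.
apply/(subseq_cons_dropP 0); exists l; split; rewrite ?kl ?l_s //.
exact: sub0seq.
Qed.

Lemma count_flatten_nseq (T : eqType) k x (L : seq T) :
  count_mem x (flatten [seq nseq k i | i <- L]) = k * count_mem x L.
Proof. by elim: L => [|i L IH] /=; rewrite ?muln0 // count_cat count_nseq IH mulnDr mulnC. Qed.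

Lemma perm_flatten_nseqP (T : eqType) k (L s : seq T) : 0 < k -> uniq L ->
  perm_eq s (flatten [seq nseq k i | i <- L]) <->
  s =i L /\ {in s, forall x, count_mem x s = k}.
Proof.
move=> k_gt0 uniq_L.
have count_L x : count_mem x (flatten [seq nseq k i | i <- L]) = k * (x \in L).
  by rewrite count_flatten_nseq count_uniq_mem.
split=> [/permP perm_s | [s_L regular_s]].
  have count_s x : count_mem x s = k * (x \in L) by rewrite perm_s count_L.
  have s_L : s =i L by move=> x; rewrite -has_pred1 has_count count_s muln_gt0 k_gt0 lt0b.
  by split=> // x; rewrite count_s s_L => ->; rewrite muln1.
apply/allP => x _ /=; rewrite count_L -s_L.
by case: (boolP (x \in s)) => [/regular_s -> | /count_memPn ->]; rewrite ?muln1 ?muln0.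
Qed.

Lemma map_inj_in2 (T U : eqType) (f : T -> U) s1 s2 :
  {in s1 & s2, forall x y, f x = f y -> x = y} -> map f s1 = map f s2 -> s1 = s2.
Proof.
elim: s1 s2 => [|x s1 IH] [|y s2] //= f_inj [fxy fs12].
congr (_ :: _); first by apply: f_inj fxy; exact: mem_head.
by apply: IH fs12 => x' y' x'_s1 y'_s2; apply: f_inj; rewrite inE ?x'_s1 ?y'_s2 orbT.
Qed.

Lemma exists_preimage_seq (T U : eqType) (f : T -> U) (P : pred T) us :
  {in us, forall u, exists2 t, P t & f t = u} -> exists2 ts, all P ts & map f ts = us.
Proof.
elim: us => [|u us IH] preim_us; first by exists [::].
have [t Pt <-] := preim_us u (mem_head _ _).
have [|ts Pts <-] := IH; first by move=> u' u'_us; apply: preim_us; rewrite inE u'_us orbT.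
by exists (t :: ts); rewrite //= Pt.
Qed.

Fixpoint ktree_code (t : ktree) : GenTree.tree nat :=
  match t with
  | Leaf => GenTree.Leaf 0
  | Node b ts => GenTree.Node b (map ktree_code ts)
  end.

Fixpoint ktree_decode (c : GenTree.tree nat) : ktree :=
  match c with
  | GenTree.Leaf _ => Leaf
  | GenTree.Node b cs => Node b (map ktree_decode cs)
  end.

Fixpoint ktree_codeK (t : ktree) : ktree_decode (ktree_code t) = t :=
  match t with
  | Leaf => erefl
  | Node b ts => congr1 (Node b)
      ((fix codeK_seq ts : map ktree_decode (map ktree_code ts) = ts :=
          match ts with
          | [::] => erefl
          | t :: ts => congr2 cons (ktree_codeK t) (codeK_seq ts)
          end) ts)
  end.

HB.instance Definition _ :=
  Equality.copy ktree (can_type ktree_codeK).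

Fixpoint ktree_ind_in (P : ktree -> Prop) (P_leaf : P Leaf)
    (P_node : forall b ts, {in ts, forall t, P t} -> P (Node b ts)) (t : ktree) : P t :=
  match t with
  | Leaf => P_leaf
  | Node b ts => P_node b ts
      ((fix P_seq ts : {in ts, forall t, P t} :=
          match ts with
          | [::] => fun t t_in => False_ind _ (notF t_in)
          | t0 :: ts => fun t t_in =>
              match elimT predU1P t_in with
              | or_introl t_t0 => eq_ind_r P (ktree_ind_in P_leaf P_node t0) t_t0
              | or_intror t_ts => P_seq ts t t_ts
              end
          end) ts)
  end.

Lemma psi_node b ts : psi (Node b ts) = flatten_rcons b (map psi ts).
Proof. by rewrite /flatten_rcons -map_comp. Qed.

Section KaryTrees.
Variable k : nat.

Lemma count_psi x t : is_kary k t -> count_mem x (psi t) = k * count_mem x (labels t).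
Proof.
elim/ktree_ind_in: t => [|b ts IH]; first by rewrite /= muln0.
rewrite psi_node /= => /andP [/eqP size_ts kary_ts].
rewrite count_flatten_rcons size_map size_ts !count_flatten !sumnE !big_map.
rewrite (eq_big_seq _ (fun t t_in => IH t t_in (allP kary_ts t t_in))) -big_distrr /=.
by rewrite mulnDr addnC mulnC.
Qed.

Hypothesis k_gt0 : 0 < k.

Lemma mem_psi t : is_kary k t -> psi t =i labels t.
Proof. by move=> kary_t x; rewrite -!has_pred1 !has_count (count_psi _ kary_t) muln_gt0 k_gt0. Qed.

Lemma mem_flatten_labels ts :
  all (is_kary k) ts -> flatten (map labels ts) =i flatten (map psi ts).
Proof.
move=> kary_ts x; apply/flatten_mapP/flatten_mapP => -[t t_in x_t]; exists t => //.
  by rewrite (mem_psi (allP kary_ts t t_in)).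
by rewrite -(mem_psi (allP kary_ts t t_in)).
Qed.

Lemma pairwise_disjoint_labels ts : all (is_kary k) ts ->
  pairwise disjoint_seq (map labels ts) = pairwise disjoint_seq (map psi ts).
Proof.
rewrite !pairwise_map; apply: eq_in_pairwise => t1 t2 kary_t1 kary_t2 /=.
by rewrite /disjoint_seq (eq_has_r (mem_psi kary_t2)) (eq_has (mem_psi kary_t1)).
Qed.

Lemma crossing_free_psi t : is_kary k t -> uniq (labels t) -> crossing_free (psi t).
Proof.
elim/ktree_ind_in: t => [_ _ // | b ts IH].
rewrite psi_node /= => /andP [_ kary_ts] /andP [b_notin].
rewrite uniq_flatten all_map pairwise_disjoint_labels // => /andP [uniq_ts disj].
apply: crossing_free_flatten_rcons => //; first by rewrite -(mem_flatten_labels kary_ts).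
by move=> _ /mapP [t t_in ->]; apply: IH t_in (allP kary_ts t t_in) (allP uniq_ts t t_in).
Qed.

Lemma psi_inj (t1 t2 : ktree) : is_kary k t1 -> uniq (labels t1) ->
  is_kary k t2 -> uniq (labels t2) -> psi t1 = psi t2 -> t1 = t2.
Proof.
have psi_node_neq0 b ts : is_kary k (Node b ts) -> psi (Node b ts) != [::].
  by move=> kary_t; apply/eqP => psi0; move: (mem_psi kary_t b); rewrite psi0 /= inE eqxx.
have pieces_neq0 ts : size ts = k -> map psi ts != [::].
  by move=> size_ts; rewrite -size_eq0 size_map size_ts -lt0n.
have uniq_subtrees ts : uniq (flatten (map labels ts)) -> {in ts, forall t, uniq (labels t)}.
  by rewrite uniq_flatten all_map => /andP [/allP].
elim/ktree_ind_in: t1 t2 => [|b1 ts1 IH] [|b2 ts2] //.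
- by move=> _ _ /psi_node_neq0 /eqP + _ psi0; rewrite -psi0.
- by move=> /psi_node_neq0 /eqP + _ _ _ psi0; rewrite psi0.
rewrite !psi_node /= => /andP [/eqP size1 kary_ts1] /andP [b1_notin /uniq_subtrees uniq_ts1].
move=> /andP [/eqP size2 kary_ts2] /andP [b2_notin /uniq_subtrees uniq_ts2] psi12.
have b12 : b1 = b2.
  by rewrite -(last_flatten_rcons 0 b1 (pieces_neq0 _ size1)) psi12 last_flatten_rcons ?pieces_neq0.
subst b2; congr (Node b1 _); apply: map_inj_in2 (flatten_rcons_inj _ _ psi12).
- move=> t1 t2 t1_in t2_in.
  exact: (IH t1 t1_in t2 (allP kary_ts1 t1 t1_in) (uniq_ts1 t1 t1_in)
            (allP kary_ts2 t2 t2_in) (uniq_ts2 t2 t2_in)).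
- by rewrite -(mem_flatten_labels kary_ts1).
- by rewrite -(mem_flatten_labels kary_ts2).
Qed.

Lemma psi_surj s : crossing_free s -> {in s, forall x, count_mem x s = k} ->
  exists t, [/\ is_kary k t, uniq (labels t) & psi t = s].
Proof.
have [m] := ubnP (size s); elim: m s => // m IH s /ltnSE size_s cf_s regular_s.
case/lastP: s size_s cf_s regular_s => [|s0 b] size_s cf_s regular_s; first by exists Leaf.
have [ws def_s b_notin] := rcons_flatten_rcons s0 b.
have size_ws : size ws = k.
  have b_s : b \in rcons s0 b by rewrite mem_rcons mem_head.
  have := regular_s b b_s.
  by rewrite def_s count_flatten_rcons (count_memPn b_notin) eqxx mul1n.
rewrite {s0}def_s in size_s cf_s regular_s *.
have disj := flatten_rcons_pairwise_disjoint b_notin cf_s.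
have regular_ws w : w \in ws -> {in w, forall x, count_mem x w = k}.
  move=> w_in x x_w; have piece := rcons_subseq_flatten_rcons b w_in.
  have b_neq_x : b != x by apply: contraNneq b_notin => ->; apply/flattenP; exists w.
  rewrite -(count_flatten_disjoint disj w_in x_w) -[RHS](regular_s x).
    by rewrite count_flatten_rcons (negbTE b_neq_x) mul0n addn0.
  by apply: (mem_subseq piece); rewrite mem_rcons inE x_w orbT.
have [|ts trees_ts map_ts] := @exists_preimage_seq _ _ psi
    (fun t => is_kary k t && uniq (labels t)) ws.
  move=> w w_in; have piece := rcons_subseq_flatten_rcons b w_in.
  have [|||t [kary_t uniq_t <-]] := IH w; last by exists t; rewrite ?kary_t.
  - by rewrite -(size_rcons w b); apply: leq_trans (size_subseq piece) size_s.
  - exact: crossing_free_subseq (subseq_trans (subseq_rcons w b) piece) cf_s.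
  - exact: regular_ws.
have kary_ts : all (is_kary k) ts by apply: sub_all trees_ts => t /andP [].
exists (Node b ts); split; last by rewrite psi_node map_ts.
  by rewrite /= -(size_map psi) map_ts size_ws eqxx.
rewrite /= (mem_flatten_labels kary_ts) map_ts b_notin uniq_flatten.
rewrite pairwise_disjoint_labels // map_ts disj andbT all_map.
by apply: sub_all trees_ts => t /andP [].
Qed.
End KaryTrees.

Theorem theorem4p1 (k n : nat) : 1 <= k ->
  (forall t, in_A k n t -> quasi_stirling k n (psi t)) /\
  (forall t1 t2, in_A k n t1 -> in_A k n t2 -> psi t1 = psi t2 -> t1 = t2) /\
  (forall s, quasi_stirling k n s -> exists t, in_A k n t /\ psi t = s).
Proof.
move=> k_gt0; have uniq_labels t : in_A k n t -> uniq (labels t).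
  by case=> _ /perm_uniq ->; exact: iota_uniq.
split; [|split].
- move=> t /[dup] /uniq_labels uniq_t [kary_t perm_t].
  split; last by apply/avoids_1212_2121P; exact: crossing_free_psi kary_t uniq_t.
  apply/(perm_flatten_nseqP _ k_gt0 (iota_uniq 1 n)); split.
    by move=> x; rewrite (mem_psi k_gt0 kary_t) (perm_mem perm_t).
  move=> x; rewrite (mem_psi k_gt0 kary_t) (count_psi _ kary_t) (count_uniq_mem _ uniq_t).
  by move=> ->; rewrite muln1.
- move=> t1 t2 /[dup] /uniq_labels uniq1 [kary1 _] /[dup] /uniq_labels uniq2 [kary2 _].
  exact: (psi_inj k_gt0 kary1 uniq1 kary2 uniq2).
- move=> s [/(perm_flatten_nseqP _ k_gt0 (iota_uniq 1 n)) [s_iota regular_s]].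
  move=> /avoids_1212_2121P cf_s.
  have [t [kary_t uniq_t psi_t]] := psi_surj k_gt0 cf_s regular_s.
  exists t; split=> //; split=> //.
  by apply: uniq_perm; rewrite ?iota_uniq // => x; rewrite -(mem_psi k_gt0 kary_t) psi_t s_iota.
Qed.
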